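(* In the Schwarzschild spacetime of mass $m>0$ written in ingoing Eddington--Finkelstein coordinates $(v,r,\omega)\in\mathbb R\times(0,\infty)\times S^2$, $\mathfrak g=-(1-\frac{2m}r)dv^2+2dv\,dr+r^2d\omega^2$, there exists a smooth one-parameter family of spacelike hypersurfaces $\{\Sigma_T\}_{T\in\mathbb R}$ such that: (i) the $\Sigma_T$ form a smooth foliation of the region $r>0$; equivalently $(T,r,\omega)$ is a smooth horizon-penetrating coordinate system with $\Sigma_T=\{T=\mathrm{const}\}$; (ii) each $\Sigma_T$ meets the future horizon $\mathcal H^+=\{r=2m\}$ in a round sphere $S_T=\Sigma_T\cap\mathcal H^+$, the family $\{S_T\}_{T\in\mathbb R}$ foliates $\mathcal H^+$, and each $S_T$ is a MOTS; (iii) there is a smooth function $r_{\mathrm{cut}}(T)=2m+2\delta_0e^{-T/(4m)}$, for some fixed constant $\delta_0>0$, so that $r_{\mathrm{cut}}(T)\downarrow2m$ as $T\to+\infty$ and $\Sigma_T\cap\{r\ge r_{\mathrm{cut}}(T)\}=\{t_{\mathrm{Sch}}=T\}\cap\{r\ge r_{\mathrm{cut}}(T)\}$; in particular $\Sigma_T$ is tangentially maximal on $r\ge r_{\mathrm{cut}}(T)$.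
   Context: On $r>2m$, the Schwarzschild time is $t_{\mathrm{Sch}}=v-r_*(r)$ with $r_*(r)=r+2m\log(\frac r{2m}-1)$. A MOTS is a closed spacelike surface whose future outgoing null expansion vanishes. A spacelike hypersurface foliated by closed spacelike surfaces (here the spheres $r=\mathrm{const}$) is tangentially maximal (on a region) if the trace over each leaf of its second fundamental form vanishes, equivalently the spacetime mean curvature vector of each leaf is tangent to the hypersurface. *)

From Stdlib Require Import Reals.
From Coquelicot Require Import Coquelicot.
Open Scope R_scope.

Definition d1 (f : R -> R -> R) : R -> R -> R :=
  fun x y => Derive (fun t => f t y) x.
Definition d2 (f : R -> R -> R) : R -> R -> R :=
  fun x y => Derive (fun t => f x t) y.

Fixpoint Ck (k : nat) (U : R -> R -> Prop) (f : R -> R -> R) : Prop :=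
  (forall x y, U x y -> continuity_2d_pt f x y) /\
  match k with
  | O => True
  | S k' =>
      (forall x y, U x y ->
         ex_derive (fun t => f t y) x /\ ex_derive (fun t => f x t) y)
      /\ Ck k' U (d1 f) /\ Ck k' U (d2 f)
  end.

Definition smooth2 (U : R -> R -> Prop) (f : R -> R -> R) : Prop :=
  forall k, Ck k U f.

Definition half_plane (x r : R) : Prop := 0 < r.

(** Schwarzschild metric in ingoing Eddington--Finkelstein coordinates,
    g = -(1-2m/r) dv^2 + 2 dv dr + r^2 domega^2.
    Its restriction to the radial (v,r)-plane, on vectors X = (X^v, X^r): *)
Definition g_rad (m r : R) (X Y : R * R) : R :=
  - (1 - 2 * m / r) * (fst X) * (fst Y) + (fst X) * (snd Y) + (snd X) * (fst Y).
(* The angular part r^2 domega^2 is positive definite for r > 0 and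
   g-orthogonal to the radial plane. *)

(** Inverse metric in the radial plane: g^{vv} = 0, g^{vr} = 1,
    g^{rr} = 1 - 2m/r.  Gradient of the area-radius function r:
    (grad r)^a = g^{ab} d_b r = (g^{vr}, g^{rr}). *)
Definition grad_r (m r : R) : R * R := (1, 1 - 2 * m / r).

Definition rstar (m r : R) : R := r + 2 * m * ln (r / (2 * m) - 1).
Definition tSch (m v r : R) : R := v - rstar m r.

(** Time orientation: -d_r is a future-directed null vector; a causal
    vector X not proportional to d_r is future-directed iff
    g(X, -d_r) < 0, i.e. X^v > 0.  The future outgoing null directions
    normal to the round sphere {v = v0, r = r0} are the null vectors of the
    radial plane with X^v > 0. *)
Definition future_outgoing_null (m r : R) (X : R * R) : Prop :=
  g_rad m r X X = 0 /\ 0 < fst X.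

(** Null expansion of the round sphere {v = v0, r = r0} (area 4 pi r0^2)
    along a radial normal vector X: theta_X = X(log r^2) = (2/r0) X^r. *)
Definition expansion (r0 : R) (X : R * R) : R := 2 / r0 * snd X.

(** MOTS: the future outgoing null expansion vanishes (the condition is
    invariant under positive rescaling of the null normal). *)
Definition round_sphere_is_MOTS (m v0 r0 : R) : Prop :=
  exists X, future_outgoing_null m r0 X /\ expansion r0 X = 0.

(** Spherically symmetric hypersurfaces Sigma_T = {v = F T r} (r > 0).
    Tangent radial vector at (F T r, r): (d2 F T r, 1). *)
Definition Sigma (F : R -> R -> R) (T : R) (v r : R) : Prop :=
  0 < r /\ v = F T r.

Definition radial_tangent (F : R -> R -> R) (T r : R) : R * R :=
  (d2 F T r, 1).

(** Sigma_T spacelike: the induced metric is positive definite, i.e. the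
    radial tangent vector is spacelike (angular directions are spacelike
    and orthogonal to it). *)
Definition spacelike_slice (m : R) (F : R -> R -> R) (T : R) : Prop :=
  forall r, 0 < r ->
    g_rad m r (radial_tangent F T r) (radial_tangent F T r) > 0.

Definition mean_curv_vec (m r : R) : R * R :=
  (- (2 / r) * fst (grad_r m r), - (2 / r) * snd (grad_r m r)).

Definition tangentially_maximal_at (m : R) (F : R -> R -> R) (T r : R) : Prop :=
  exists lam : R,
    mean_curv_vec m r = (lam * fst (radial_tangent F T r),
                         lam * snd (radial_tangent F T r)).

(* Take Sigma_T = {v = F(T,r)} with
     F(T,r) = T/2 + r + 2m (L(s) - L(2) - ln m),   s = (r - 2m) e^(T/4m),
   where L is smooth, vanishes for s <= 1, satisfies 0 <= s L'(s) <= 1, and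
   equals L(2) + ln (s/2) for s >= 2.  On {s >= 2}, which contains
   {r >= 2m + 2 e^(-T/4m)}, this reads F = T + r_*(r), i.e. Sigma_T = {t_Sch = T},
   and the slope dF/dr = r/(r - 2m) makes the leaves tangentially maximal.
   Everywhere (1 - 2m/r) dF/dr = (r - 2m + 2m s L'(s))/r <= 1, so Sigma_T is
   spacelike.  Solving v = F(T,r) for T amounts to inverting the diffeomorphism
   s |-> s e^(L(s)) of R, which yields the smooth inverse G.  On the horizon
   r = 2m the outgoing null normal d_v has no r-component, so every round
   sphere there is a MOTS. *)

From Stdlib Require Import Reals Lra Lia Ranalysis5 FunctionalExtensionality.
From Coquelicot Require Import Coquelicot.
Open Scope R_scope.

(** * Smooth functions of one variable *)

Fixpoint Cn (n : nat) (f : R -> R) : Prop :=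
  match n with
  | O => forall x, continuous f x
  | S n' => (forall x, ex_derive f x) /\ Cn n' (Derive f)
  end.

Lemma Cn_cont n f : Cn n f -> forall x, continuous f x.
Proof.
  destruct n as [|n]; simpl; [auto|].
  intros [Hf _] x. exact (ex_derive_continuous f x (Hf x)).
Qed.

Lemma Cn_pred n f : Cn (S n) f -> Cn n f.
Proof.
  revert f; induction n as [|n IH]; intros f Hf.
  - exact (Cn_cont 1 f Hf).
  - destruct Hf as [Hf1 Hf2]. split; auto.
Qed.

Lemma Cn_ext n f g : (forall x, f x = g x) -> Cn n f -> Cn n g.
Proof.
  intros E. replace g with f by (apply functional_extensionality; exact E). auto.
Qed.

Lemma Cn_const n c : Cn n (fun _ => c).
Proof.
  revert c; induction n as [|n IH]; intros c; simpl.
  - intros x. apply continuous_const.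
  - split; [intros; apply ex_derive_const|].
    apply Cn_ext with (fun _ => 0); [intros; rewrite Derive_const; auto | apply IH].
Qed.

Lemma Cn_id n : Cn n (fun x => x).
Proof.
  destruct n as [|n]; simpl.
  - intros x. apply continuous_id.
  - split; [intros; apply ex_derive_id|].
    apply Cn_ext with (fun _ => 1); [intros; rewrite Derive_id; auto | apply Cn_const].
Qed.

Lemma Cn_plus n f g : Cn n f -> Cn n g -> Cn n (fun x => f x + g x).
Proof.
  revert f g; induction n as [|n IH]; intros f g Hf Hg.
  - intros x. apply (continuous_plus f g); auto.
  - destruct Hf as [Hf1 Hf2], Hg as [Hg1 Hg2]. split.
    + intros; apply (ex_derive_plus f g); auto.
    + apply Cn_ext with (fun x => Derive f x + Derive g x); auto.
      intros; rewrite Derive_plus; auto.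
Qed.

Lemma Cn_mult n f g : Cn n f -> Cn n g -> Cn n (fun x => f x * g x).
Proof.
  revert f g; induction n as [|n IH]; intros f g Hf Hg.
  - intros x. apply (continuous_mult f g); auto.
  - pose proof (Cn_pred _ _ Hf) as Hf'. pose proof (Cn_pred _ _ Hg) as Hg'.
    destruct Hf as [Hf1 Hf2], Hg as [Hg1 Hg2]. split.
    + intros; apply (ex_derive_mult f g); auto.
    + apply Cn_ext with (fun x => Derive f x * g x + f x * Derive g x).
      * intros; rewrite Derive_mult; auto.
      * apply Cn_plus; auto.
Qed.

Lemma Cn_comp n f g : Cn n f -> Cn n g -> Cn n (fun x => g (f x)).
Proof.
  revert f g; induction n as [|n IH]; intros f g Hf Hg.
  - intros x. apply continuous_comp; auto.
  - pose proof (Cn_pred _ _ Hf) as Hf'.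
    destruct Hf as [Hf1 Hf2], Hg as [Hg1 Hg2]. split.
    + intros; apply (ex_derive_comp g f); auto.
    + apply Cn_ext with (fun x => Derive g (f x) * Derive f x).
      * intros; rewrite (Derive_comp g f); auto; apply Rmult_comm.
      * apply Cn_mult; auto.
Qed.

Lemma Cn_inv n f : (forall x, f x <> 0) -> Cn n f -> Cn n (fun x => / f x).
Proof.
  intros Hnz. revert f Hnz; induction n as [|n IH]; intros f Hnz Hf.
  - intros x. apply continuous_comp with (g := Rinv); auto.
    apply continuity_pt_filterlim, continuity_pt_inv; [apply continuity_pt_id | auto].
  - pose proof (Cn_pred _ _ Hf) as Hf'. destruct Hf as [Hf1 Hf2]. split.
    + intros; apply (ex_derive_inv f); auto.
    + apply Cn_ext with (fun x => - Derive f x * (/ f x * / f x)).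
      * intros; rewrite Derive_inv; auto. field; auto.
      * apply Cn_mult; [|apply Cn_mult; auto].
        apply Cn_ext with (fun x => -1 * Derive f x); [intros; ring|].
        apply Cn_mult; [apply Cn_const | auto].
Qed.

Lemma Cn_exp n : Cn n exp.
Proof.
  induction n as [|n IH]; simpl.
  - intros x. apply (ex_derive_continuous exp x). eexists; apply is_derive_exp.
  - split; [intros x; eexists; apply is_derive_exp|].
    apply Cn_ext with exp; auto.
    intros; symmetry; apply is_derive_unique, is_derive_exp.
Qed.

(** * A smooth step and a logarithm cut off below 1 *)

Definition flat_pow (k : nat) (s : R) : R := exp (- / s) * (/ s) ^ k.
Definition flat (k : nat) (s : R) : R := if Rle_dec s 0 then 0 else flat_pow k s.

Lemma is_derive_flat_pow k s : s <> 0 ->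
  is_derive (flat_pow k) s (flat_pow (S (S k)) s - INR k * flat_pow (S k) s).
Proof.
  intros Hs. unfold flat_pow. auto_derive; auto.
  destruct k as [|k]; [simpl; field; auto|].
  rewrite S_INR. simpl. field. auto.
Qed.

Lemma pow_le_exp j t : 0 <= t -> t ^ S j <= INR (S j) ^ S j * exp t.
Proof.
  intros Ht. set (N := INR (S j)).
  assert (HN : 0 < N) by (apply lt_0_INR; lia).
  replace t with (N * (t / N)) at 1 by (field; lra).
  rewrite Rpow_mult_distr.
  replace (exp t) with (exp (t / N) ^ S j).
  2:{ rewrite <- Rpower_pow by apply exp_pos. unfold Rpower. rewrite ln_exp.
       f_equal. fold N. field. lra. }
  apply Rmult_le_compat_l; [apply pow_le; lra|].
  apply pow_incr. split; [apply Rdiv_le_0_compat; lra|].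
  pose proof (exp_ineq1_le (t / N)). lra.
Qed.

Lemma flat_pow_le_linear k h : 0 < h -> 0 <= flat_pow k h <= INR (S k) ^ S k * h.
Proof.
  intros Hh. assert (Hi : 0 < / h) by (apply Rinv_0_lt_compat; lra).
  pose proof (exp_pos (/ h)) as He.
  pose proof (pow_le_exp k (/ h) (Rlt_le _ _ Hi)) as B. simpl in B.
  unfold flat_pow. rewrite exp_Ropp. split.
  - apply Rmult_le_pos; [left; apply Rinv_0_lt_compat; lra | apply pow_le; lra].
  - apply Rmult_le_reg_r with (exp (/ h) * / h); [nra|].
    replace (/ exp (/ h) * (/ h) ^ k * (exp (/ h) * / h)) with (/ h * (/ h) ^ k)
      by (field; lra).
    replace (INR (S k) ^ S k * h * (exp (/ h) * / h)) with (INR (S k) ^ S k * exp (/ h))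
      by (field; lra).
    exact B.
Qed.

Lemma flat_eq0 k s : s <= 0 -> flat k s = 0.
Proof. intros Hs. unfold flat. destruct (Rle_dec s 0); [auto | lra]. Qed.

Lemma flat_eq_pow k s : 0 < s -> flat k s = flat_pow k s.
Proof. intros Hs. unfold flat. destruct (Rle_dec s 0); [lra | auto]. Qed.

Lemma is_derive_flat_at0 k : is_derive (flat k) 0 0.
Proof.
  set (C := INR (S (S k)) ^ S (S k)).
  assert (HC : 0 < C) by (apply pow_lt, lt_0_INR; lia).
  apply is_derive_Reals. intros eps Heps.
  exists (mkposreal (eps / C) (Rdiv_lt_0_compat _ _ Heps HC)). simpl.
  intros h Hh0 Hh. rewrite Rplus_0_l, (flat_eq0 k 0) by lra.
  destruct (Rle_dec h 0) as [Hn|Hp].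
  - rewrite flat_eq0 by lra.
    replace ((0 - 0) / h - 0) with 0 by (field; lra). rewrite Rabs_R0. auto.
  - rewrite flat_eq_pow by lra.
    replace ((flat_pow k h - 0) / h - 0) with (flat_pow (S k) h)
      by (unfold flat_pow; simpl; field; lra).
    destruct (flat_pow_le_linear (S k) h) as [B1 B2]; [lra|]. fold C in B2.
    rewrite Rabs_pos_eq by auto. rewrite Rabs_pos_eq in Hh by lra.
    apply Rmult_lt_compat_l with (r := C) in Hh; auto.
    replace (C * (eps / C)) with eps in Hh by (field; lra). lra.
Qed.

Lemma is_derive_flat k s : is_derive (flat k) s (flat (S (S k)) s - INR k * flat (S k) s).
Proof.
  destruct (Rtotal_order s 0) as [Hs|[Hs|Hs]].
  - rewrite !flat_eq0 by lra. replace (0 - INR k * 0) with 0 by ring.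
    apply is_derive_ext_loc with (fun _ => 0); [|apply (is_derive_const 0 s)].
    apply locally_interval with m_infty 0; simpl; auto.
    intros y _ Hy. rewrite flat_eq0 by lra. auto.
  - subst s. rewrite !flat_eq0 by lra. replace (0 - INR k * 0) with 0 by ring.
    apply is_derive_flat_at0.
  - rewrite !flat_eq_pow by lra.
    apply is_derive_ext_loc with (flat_pow k); [|apply is_derive_flat_pow; lra].
    apply locally_interval with 0 p_infty; simpl; auto.
    intros y Hy _. rewrite flat_eq_pow by lra. auto.
Qed.

Lemma Cn_flat n k : Cn n (flat k).
Proof.
  revert k; induction n as [|n IH]; intros k.
  - intros x. apply (ex_derive_continuous (flat k) x). eexists; apply is_derive_flat.
  - split; [intros x; eexists; apply is_derive_flat|].
    apply Cn_ext with (fun s => flat (S (S k)) s + - INR k * flat (S k) s).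
    + intros x. rewrite (is_derive_unique _ _ _ (is_derive_flat k x)). ring.
    + apply Cn_plus; auto. apply Cn_mult; auto. apply Cn_const.
Qed.

Lemma flat_ge0 k s : 0 <= flat k s.
Proof.
  destruct (Rle_dec s 0).
  - rewrite flat_eq0 by auto. lra.
  - rewrite flat_eq_pow by lra. unfold flat_pow.
    apply Rmult_le_pos; [left; apply exp_pos | apply pow_le].
    left; apply Rinv_0_lt_compat; lra.
Qed.

Lemma flat0_gt0 s : 0 < s -> 0 < flat 0 s.
Proof. intros Hs. rewrite flat_eq_pow by auto. unfold flat_pow. simpl. rewrite Rmult_1_r. apply exp_pos. Qed.

Definition smooth_step (t : R) : R := flat 0 (t - 1) / (flat 0 (t - 1) + flat 0 (2 - t)).

Lemma smooth_step_denom_pos t : 0 < flat 0 (t - 1) + flat 0 (2 - t).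
Proof.
  pose proof (flat_ge0 0 (t - 1)). pose proof (flat_ge0 0 (2 - t)).
  destruct (Rle_dec t 1).
  - pose proof (flat0_gt0 (2 - t)). lra.
  - pose proof (flat0_gt0 (t - 1)). lra.
Qed.

Lemma Cn_smooth_step n : Cn n smooth_step.
Proof.
  assert (Hl : Cn n (fun t => flat 0 (t - 1))).
  { apply (Cn_comp n (fun t => t - 1)); [|apply Cn_flat].
    apply Cn_plus; [apply Cn_id | apply Cn_const]. }
  assert (Hr : Cn n (fun t => flat 0 (2 - t))).
  { apply (Cn_comp n (fun t => 2 - t)); [|apply Cn_flat].
    apply Cn_ext with (fun t => 2 + -1 * t); [intros; ring|].
    apply Cn_plus; [apply Cn_const | apply Cn_mult; [apply Cn_const | apply Cn_id]]. }
  apply Cn_mult; auto. apply Cn_inv; [|apply Cn_plus; auto].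
  intros t. pose proof (smooth_step_denom_pos t). lra.
Qed.

Lemma smooth_step_le1 t : t <= 1 -> smooth_step t = 0.
Proof. intros Ht. unfold smooth_step. rewrite (flat_eq0 0 (t - 1)) by lra. unfold Rdiv. ring. Qed.

Lemma smooth_step_ge2 t : 2 <= t -> smooth_step t = 1.
Proof.
  intros Ht. unfold smooth_step. rewrite (flat_eq0 0 (2 - t)) by lra.
  pose proof (flat0_gt0 (t - 1)). field. lra.
Qed.

Lemma smooth_step_bounds t : 0 <= smooth_step t <= 1.
Proof.
  pose proof (smooth_step_denom_pos t).
  pose proof (flat_ge0 0 (t - 1)). pose proof (flat_ge0 0 (2 - t)).
  unfold smooth_step. split.
  - apply Rdiv_le_0_compat; lra.
  - apply Rmult_le_reg_r with (flat 0 (t - 1) + flat 0 (2 - t)); auto.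
    unfold Rdiv. rewrite Rmult_assoc, Rinv_l by lra. lra.
Qed.

(* The denominator is 1 where smooth_step vanishes and t where it is 1, so no
   division by t occurs near 0. *)
Definition inv_cutoff (t : R) : R := smooth_step t / (1 + smooth_step t * (t - 1)).

Lemma inv_cutoff_denom_ge1 t : 1 <= 1 + smooth_step t * (t - 1).
Proof.
  destruct (Rle_dec t 1).
  - rewrite smooth_step_le1 by auto. lra.
  - pose proof (smooth_step_bounds t). nra.
Qed.

Lemma Cn_inv_cutoff n : Cn n inv_cutoff.
Proof.
  apply Cn_mult; [apply Cn_smooth_step|].
  apply Cn_inv; [intros t; pose proof (inv_cutoff_denom_ge1 t); lra|].
  apply Cn_plus; [apply Cn_const|].
  apply Cn_mult; [apply Cn_smooth_step | apply Cn_plus; [apply Cn_id | apply Cn_const]].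
Qed.

Lemma inv_cutoff_le1 t : t <= 1 -> inv_cutoff t = 0.
Proof. intros Ht. unfold inv_cutoff. rewrite smooth_step_le1 by auto. unfold Rdiv. ring. Qed.

Lemma inv_cutoff_ge2 t : 2 <= t -> inv_cutoff t = / t.
Proof. intros Ht. unfold inv_cutoff. rewrite smooth_step_ge2 by auto. field. lra. Qed.

Lemma inv_cutoff_ge0 t : 0 <= inv_cutoff t.
Proof.
  pose proof (smooth_step_bounds t). pose proof (inv_cutoff_denom_ge1 t).
  apply Rdiv_le_0_compat; lra.
Qed.

Lemma mul_inv_cutoff_bounds t : 0 <= t * inv_cutoff t <= 1.
Proof.
  destruct (Rle_dec t 1).
  - rewrite inv_cutoff_le1 by auto. lra.
  - pose proof (smooth_step_bounds t). pose proof (inv_cutoff_denom_ge1 t).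
    unfold inv_cutoff. split.
    + apply Rmult_le_pos; [lra | apply Rdiv_le_0_compat; lra].
    + apply Rmult_le_reg_r with (1 + smooth_step t * (t - 1)); [lra|].
      replace (t * (smooth_step t / (1 + smooth_step t * (t - 1))) *
               (1 + smooth_step t * (t - 1))) with (t * smooth_step t) by (field; lra).
      nra.
Qed.

Lemma ex_RInt_inv_cutoff a b : ex_RInt inv_cutoff a b.
Proof.
  apply (ex_RInt_continuous (V := R_CompleteNormedModule)).
  intros; apply (Cn_cont 0), Cn_inv_cutoff.
Qed.

Definition log_cutoff (s : R) : R := RInt inv_cutoff 0 s.

Lemma is_derive_log_cutoff s : is_derive log_cutoff s (inv_cutoff s).
Proof.
  apply (is_derive_RInt inv_cutoff log_cutoff 0 s).
  - apply filter_forall. intros b.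
    apply (RInt_correct (V := R_CompleteNormedModule)), ex_RInt_inv_cutoff.
  - apply (Cn_cont 0), Cn_inv_cutoff.
Qed.

Lemma Cn_log_cutoff n : Cn n log_cutoff.
Proof.
  apply Cn_pred. split; [intros x; eexists; apply is_derive_log_cutoff|].
  apply Cn_ext with inv_cutoff; [|apply Cn_inv_cutoff].
  intros; symmetry; apply is_derive_unique, is_derive_log_cutoff.
Qed.

Lemma log_cutoff_le1 s : s <= 1 -> log_cutoff s = 0.
Proof.
  intros Hs. unfold log_cutoff. rewrite (RInt_ext inv_cutoff (fun _ => 0)).
  - rewrite RInt_const. apply Rmult_0_r.
  - intros x [_ Hx]. apply inv_cutoff_le1.
    assert (Rmax 0 s <= 1) by (apply Rmax_lub; lra). lra.
Qed.

Lemma log_cutoff_ge0 s : 0 <= s -> 0 <= log_cutoff s.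
Proof.
  intros Hs. apply RInt_ge_0; auto; [apply ex_RInt_inv_cutoff|].
  intros; apply inv_cutoff_ge0.
Qed.

Lemma log_cutoff_ge2 s : 2 <= s -> log_cutoff s = log_cutoff 2 + ln s - ln 2.
Proof.
  intros Hs.
  assert (Hmin : 2 <= Rmin 2 s) by (apply Rmin_glb; lra).
  assert (E : RInt inv_cutoff 2 s = ln s - ln 2).
  { rewrite (RInt_ext inv_cutoff Rinv).
    - apply is_RInt_unique, (is_RInt_derive ln Rinv 2 s).
      + intros x [Hx _]. apply is_derive_ln. lra.
      + intros x [Hx _]. apply continuity_pt_filterlim, continuity_pt_inv;
          [apply continuity_pt_id | unfold id; lra].
    - intros x [Hx _]. apply inv_cutoff_ge2. lra. }
  unfold log_cutoff.
  rewrite <- (RInt_Chasles inv_cutoff 0 2 s) by apply ex_RInt_inv_cutoff.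
  change (plus ?a ?b) with (a + b). lra.
Qed.

(** * Smooth inverse functions *)

Section InverseFunction.

Variables f g df : R -> R.
Hypothesis is_derive_f : forall s, is_derive f s (df s).
Hypothesis df_gt0 : forall s, 0 < df s.
Hypothesis fK : forall s, g (f s) = s.
Hypothesis gK : forall u, f (g u) = u.

Lemma strict_increasing_of_derive_pos a b : a < b -> f a < f b.
Proof.
  intros Hab.
  pose (pr := fun s => ex_derive_Reals_0 f s (ex_intro _ _ (is_derive_f s))).
  apply (derive_increasing_interv a b f pr Hab); try lra.
  intros t _. rewrite Derive_Reals, (is_derive_unique _ _ _ (is_derive_f t)). auto.
Qed.

Lemma strict_increasing_inverse a b : a < b -> g a < g b.
Proof.
  intros Hab. destruct (Rlt_le_dec (g a) (g b)) as [|[Hlt|Heq]]; auto.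
  - apply strict_increasing_of_derive_pos in Hlt. rewrite !gK in Hlt. lra.
  - apply (f_equal f) in Heq. rewrite !gK in Heq. lra.
Qed.

Lemma continuity_pt_inverse u : continuity_pt g u.
Proof.
  apply (continuity_pt_recip_interv f g (g u - 1) (g u + 1)); try lra.
  - intros; apply strict_increasing_of_derive_pos; lra.
  - intros; apply gK.
  - intros x Hl Hu.
    assert (Hmono : forall a b, a <= b -> g a <= g b).
    { intros a b [Hab| ->]; [left; apply strict_increasing_inverse; auto | lra]. }
    split; [rewrite <- (fK (g u - 1)) at 1 | rewrite <- (fK (g u + 1))]; apply Hmono; auto.
  - intros; apply continuity_pt_filterlim, (ex_derive_continuous f).
    eexists; apply is_derive_f.
  - pose proof (strict_increasing_of_derive_pos (g u - 1) (g u)).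
    pose proof (strict_increasing_of_derive_pos (g u) (g u + 1)).
    rewrite gK in *. lra.
Qed.

Lemma is_derive_inverse u : is_derive g u (/ df (g u)).
Proof.
  assert (Prf : forall a, g (u - 1) <= a <= g (u + 1) -> derivable_pt f a).
  { intros a _. apply ex_derive_Reals_0. eexists; apply is_derive_f. }
  assert (Hi : g (u - 1) <= g u <= g (u + 1)).
  { split; left; apply strict_increasing_inverse; lra. }
  assert (E : derive_pt f (g u) (Prf (g u) Hi) = df (g u)).
  { rewrite Derive_Reals. apply is_derive_unique, is_derive_f. }
  apply is_derive_Reals.
  replace (/ df (g u)) with (1 / derive_pt f (g u) (Prf (g u) Hi))
    by (rewrite E; unfold Rdiv; ring).
  apply (derivable_pt_lim_recip_interv f g (u - 1) (u + 1) u Prf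
           (continuity_pt_inverse u)); try lra.
  - intros; apply gK.
  - rewrite E. pose proof (df_gt0 (g u)). lra.
Qed.

Lemma Cn_inverse : (forall n, Cn n (fun s => / df s)) -> forall n, Cn n g.
Proof.
  intros Hdf n. induction n as [|n IH].
  - intros u. apply continuity_pt_filterlim, continuity_pt_inverse.
  - split; [intros u; eexists; apply is_derive_inverse|].
    apply Cn_ext with (fun u => / df (g u)).
    + intros u. symmetry. apply is_derive_unique, is_derive_inverse.
    + apply (Cn_comp n g (fun s => / df s)); auto.
Qed.

End InverseFunction.

Definition stretch (s : R) : R := s * exp (log_cutoff s).

Definition stretch_slope (s : R) : R := exp (log_cutoff s) * (1 + s * inv_cutoff s).

Lemma is_derive_stretch s : is_derive stretch s (stretch_slope s).
Proof.
  unfold stretch, stretch_slope. auto_derive; [eexists; apply is_derive_log_cutoff|].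
  rewrite (is_derive_unique (fun x => log_cutoff x) _ _ (is_derive_log_cutoff _)).
  ring.
Qed.

Lemma stretch_slope_gt0 s : 0 < stretch_slope s.
Proof.
  apply Rmult_lt_0_compat; [apply exp_pos|].
  pose proof (mul_inv_cutoff_bounds s). lra.
Qed.

Lemma Cn_inv_stretch_slope n : Cn n (fun s => / stretch_slope s).
Proof.
  apply Cn_inv; [intros s; pose proof (stretch_slope_gt0 s); lra|].
  apply Cn_mult; [apply Cn_comp; [apply Cn_log_cutoff | apply Cn_exp]|].
  apply Cn_plus; [apply Cn_const | apply Cn_mult; [apply Cn_id | apply Cn_inv_cutoff]].
Qed.

Lemma stretch_le1 s : s <= 1 -> stretch s = s.
Proof. intros Hs. unfold stretch. rewrite log_cutoff_le1, exp_0 by auto. ring. Qed.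

Lemma stretch_ge_id s : 0 <= s -> s <= stretch s.
Proof.
  intros Hs. unfold stretch.
  pose proof (exp_ineq1_le (log_cutoff s)). pose proof (log_cutoff_ge0 s Hs).
  nra.
Qed.

Lemma continuity_stretch : continuity stretch.
Proof.
  intros s. apply continuity_pt_filterlim, (ex_derive_continuous stretch).
  eexists; apply is_derive_stretch.
Qed.

Lemma stretch_bracket u :
  Rmin (stretch (- Rabs u)) (stretch (Rabs u)) <= u <= Rmax (stretch (- Rabs u)) (stretch (Rabs u)).
Proof.
  assert (Hu : - Rabs u <= u <= Rabs u) by (unfold Rabs; destruct (Rcase_abs u); lra).
  pose proof (stretch_ge_id (Rabs u) (Rabs_pos u)).
  rewrite (stretch_le1 (- Rabs u)) by (pose proof (Rabs_pos u); lra).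
  split; [eapply Rle_trans; [apply Rmin_l|] | eapply Rle_trans; [|apply Rmax_r]]; lra.
Qed.

Definition stretch_inv (u : R) : R :=
  proj1_sig (IVT_gen stretch (- Rabs u) (Rabs u) u continuity_stretch (stretch_bracket u)).

Lemma stretch_invK u : stretch (stretch_inv u) = u.
Proof. exact (proj2 (proj2_sig (IVT_gen _ _ _ _ _ _))). Qed.

Lemma stretchK s : stretch_inv (stretch s) = s.
Proof.
  set (s' := stretch_inv (stretch s)).
  assert (E : stretch s' = stretch s) by apply stretch_invK.
  pose proof (strict_increasing_of_derive_pos _ _ is_derive_stretch stretch_slope_gt0) as Hlt.
  destruct (Rtotal_order s' s) as [H|[H|H]]; auto; apply Hlt in H; lra.
Qed.

Lemma Cn_stretch_inv n : Cn n stretch_inv.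
Proof.
  exact (Cn_inverse _ _ _ is_derive_stretch stretch_slope_gt0 stretchK stretch_invK
           Cn_inv_stretch_slope n).
Qed.

(** * Smooth functions of two variables *)

(* The closure lemmas are stated on the whole plane: the sum, product and chain
   rules for partial derivatives hold only where these exist, and [Ck_ext]
   needs the rewritten derivatives to agree everywhere. *)
Definition plane (x y : R) : Prop := True.

Lemma Ck_pred k U f : Ck (S k) U f -> Ck k U f.
Proof.
  revert f; induction k as [|k IH]; intros f Hf.
  - destruct Hf as [Hf _]. split; auto.
  - destruct Hf as [Hf0 [Hf1 [Hf2 Hf3]]]. split; auto.
Qed.

Lemma Ck_restrict k U V f : (forall x y, U x y -> V x y) -> Ck k V f -> Ck k U f.
Proof.
  intros HUV. revert f; induction k as [|k IH]; intros f Hf.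
  - destruct Hf as [Hf _]. split; auto.
  - destruct Hf as [Hf0 [Hf1 [Hf2 Hf3]]]. split; auto.
Qed.

Lemma Ck_ext k U f g : (forall x y, f x y = g x y) -> Ck k U f -> Ck k U g.
Proof.
  intros E.
  replace g with f by (do 2 (apply functional_extensionality; intro); apply E).
  auto.
Qed.

Lemma Ck_const k c : Ck k plane (fun _ _ => c).
Proof.
  revert c; induction k as [|k IH]; intros c.
  - split; auto. intros; apply continuity_2d_pt_const.
  - split; [intros; apply continuity_2d_pt_const|].
    split; [intros; split; apply ex_derive_const|].
    unfold d1, d2. split; apply Ck_ext with (fun _ _ => 0); auto;
      intros; rewrite Derive_const; auto.
Qed.

Lemma Ck_fst k : Ck k plane (fun x _ => x).
Proof.
  destruct k as [|k].
  - split; auto. intros; apply continuity_2d_pt_id1.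
  - split; [intros; apply continuity_2d_pt_id1|].
    split; [intros; split; [apply ex_derive_id | apply ex_derive_const]|].
    unfold d1, d2. split.
    + apply Ck_ext with (fun _ _ => 1); [intros; rewrite Derive_id; auto | apply Ck_const].
    + apply Ck_ext with (fun _ _ => 0); [intros; rewrite Derive_const; auto | apply Ck_const].
Qed.

Lemma Ck_snd k : Ck k plane (fun _ y => y).
Proof.
  destruct k as [|k].
  - split; auto. intros; apply continuity_2d_pt_id2.
  - split; [intros; apply continuity_2d_pt_id2|].
    split; [intros; split; [apply ex_derive_const | apply ex_derive_id]|].
    unfold d1, d2. split.
    + apply Ck_ext with (fun _ _ => 0); [intros; rewrite Derive_const; auto | apply Ck_const].
    + apply Ck_ext with (fun _ _ => 1); [intros; rewrite Derive_id; auto | apply Ck_const].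
Qed.

Lemma Ck_plus k f g : Ck k plane f -> Ck k plane g -> Ck k plane (fun x y => f x y + g x y).
Proof.
  revert f g; induction k as [|k IH]; intros f g Hf Hg.
  - destruct Hf as [Hf _], Hg as [Hg _]. split; auto.
    intros; apply continuity_2d_pt_plus; auto.
  - destruct Hf as [Hf0 [Hf1 [Hf2 Hf3]]], Hg as [Hg0 [Hg1 [Hg2 Hg3]]].
    split; [intros; apply continuity_2d_pt_plus; auto|].
    split.
    { intros x y _. destruct (Hf1 x y I), (Hg1 x y I). split.
      - apply (ex_derive_plus (fun t => f t y) (fun t => g t y)); auto.
      - apply (ex_derive_plus (fun t => f x t) (fun t => g x t)); auto. }
    split.
    + apply Ck_ext with (fun x y => d1 f x y + d1 g x y); auto.
      intros x y. destruct (Hf1 x y I), (Hg1 x y I). unfold d1.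
      rewrite (Derive_plus (fun t => f t y) (fun t => g t y)); auto.
    + apply Ck_ext with (fun x y => d2 f x y + d2 g x y); auto.
      intros x y. destruct (Hf1 x y I), (Hg1 x y I). unfold d2.
      rewrite (Derive_plus (fun t => f x t) (fun t => g x t)); auto.
Qed.

Lemma Ck_mult k f g : Ck k plane f -> Ck k plane g -> Ck k plane (fun x y => f x y * g x y).
Proof.
  revert f g; induction k as [|k IH]; intros f g Hf Hg.
  - destruct Hf as [Hf _], Hg as [Hg _]. split; auto.
    intros; apply continuity_2d_pt_mult; auto.
  - pose proof (Ck_pred _ _ _ Hf) as Hf'. pose proof (Ck_pred _ _ _ Hg) as Hg'.
    destruct Hf as [Hf0 [Hf1 [Hf2 Hf3]]], Hg as [Hg0 [Hg1 [Hg2 Hg3]]].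
    split; [intros; apply continuity_2d_pt_mult; auto|].
    split.
    { intros x y _. destruct (Hf1 x y I), (Hg1 x y I). split.
      - apply (ex_derive_mult (fun t => f t y) (fun t => g t y)); auto.
      - apply (ex_derive_mult (fun t => f x t) (fun t => g x t)); auto. }
    split.
    + apply Ck_ext with (fun x y => d1 f x y * g x y + f x y * d1 g x y).
      * intros x y. destruct (Hf1 x y I), (Hg1 x y I). unfold d1.
        rewrite (Derive_mult (fun t => f t y) (fun t => g t y)); auto.
      * apply Ck_plus; auto.
    + apply Ck_ext with (fun x y => d2 f x y * g x y + f x y * d2 g x y).
      * intros x y. destruct (Hf1 x y I), (Hg1 x y I). unfold d2.
        rewrite (Derive_mult (fun t => f x t) (fun t => g x t)); auto.
      * apply Ck_plus; auto.
Qed.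

Lemma Ck_opp k f : Ck k plane f -> Ck k plane (fun x y => - f x y).
Proof.
  intros Hf. apply Ck_ext with (fun x y => -1 * f x y); [intros; ring|].
  apply Ck_mult; [apply Ck_const | auto].
Qed.

Lemma Ck_comp k (phi : R -> R) f : Cn k phi -> Ck k plane f -> Ck k plane (fun x y => phi (f x y)).
Proof.
  revert phi f; induction k as [|k IH]; intros phi f Hp Hf.
  - destruct Hf as [Hf _]. split; auto.
    intros x y _. apply continuity_1d_2d_pt_comp; [|apply Hf; exact I].
    apply continuity_pt_filterlim. exact (Cn_cont 0 phi Hp (f x y)).
  - pose proof (Ck_pred _ _ _ Hf) as Hf'. pose proof (Cn_pred _ _ Hp) as Hp'.
    destruct Hf as [Hf0 [Hf1 [Hf2 Hf3]]]. destruct Hp as [Hp1 Hp2].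
    split.
    { intros x y _. apply continuity_1d_2d_pt_comp; [|apply Hf0; exact I].
      apply continuity_pt_filterlim. exact (Cn_cont k phi Hp' (f x y)). }
    split.
    { intros x y _. destruct (Hf1 x y I). split.
      - apply (ex_derive_comp phi (fun t => f t y)); auto.
      - apply (ex_derive_comp phi (fun t => f x t)); auto. }
    split.
    + apply Ck_ext with (fun x y => Derive phi (f x y) * d1 f x y).
      * intros x y. destruct (Hf1 x y I). unfold d1.
        rewrite (Derive_comp phi (fun t => f t y)); auto. apply Rmult_comm.
      * apply Ck_mult; auto.
    + apply Ck_ext with (fun x y => Derive phi (f x y) * d2 f x y).
      * intros x y. destruct (Hf1 x y I). unfold d2.
        rewrite (Derive_comp phi (fun t => f x t)); auto. apply Rmult_comm.
      * apply Ck_mult; auto.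
Qed.


Lemma smooth2_of_plane U f : (forall k, Ck k plane f) -> smooth2 U f.
Proof. intros Hf k. apply Ck_restrict with plane; [constructor | apply Hf]. Qed.

(** * Radial geometry of the Schwarzschild exterior and horizon *)

Lemma radial_spacelike m r a : 0 < r -> 0 < a -> (1 - 2 * m / r) * a < 2 ->
  g_rad m r (a, 1) (a, 1) > 0.
Proof.
  intros Hr Ha Hlt. unfold g_rad; simpl.
  replace (- (1 - 2 * m / r) * a * a + a * 1 + 1 * a) with (a * (2 - (1 - 2 * m / r) * a))
    by ring.
  apply Rmult_lt_0_compat; lra.
Qed.

Lemma tangentially_maximal_of_slope m F T r :
  d2 F T r * (1 - 2 * m / r) = 1 -> tangentially_maximal_at m F T r.
Proof.
  intros Hslope. exists (- (2 / r) * (1 - 2 * m / r)).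
  unfold mean_curv_vec, grad_r, radial_tangent; simpl.
  f_equal; [rewrite <- Hslope at 1|]; ring.
Qed.

Lemma horizon_sphere_MOTS m v : 0 < m -> round_sphere_is_MOTS m v (2 * m).
Proof.
  intros Hm. exists (1, 0).
  unfold future_outgoing_null, expansion, g_rad; simpl.
  split; [split; [field; lra | lra] | ring].
Qed.

Lemma Sigma_unique_of_inverse F G v r : 0 < r ->
  (forall T, G (F T r) r = T) -> F (G v r) r = v -> exists! T, Sigma F T v r.
Proof.
  intros Hr HGF HFG. exists (G v r). split.
  - split; auto.
  - intros T [_ ->]. apply HGF.
Qed.

Lemma Sigma_iff_tSch m F T v r : 0 < r -> F T r = T + rstar m r ->
  (Sigma F T v r <-> tSch m v r = T).
Proof.
  intros Hr HF. unfold Sigma, tSch. rewrite HF.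
  split; [intros [_ ->]; ring | intros E; split; [auto | rewrite <- E; ring]].
Qed.

Definition rcut (m delta0 T : R) : R := 2 * m + 2 * delta0 * exp (- T / (4 * m)).

Lemma rcut_decreasing m delta0 T1 T2 : 0 < m -> 0 < delta0 -> T1 < T2 ->
  rcut m delta0 T2 < rcut m delta0 T1.
Proof.
  intros Hm Hd HT. unfold rcut.
  apply Rplus_lt_compat_l, Rmult_lt_compat_l; [lra|].
  apply exp_increasing. unfold Rdiv.
  apply Rmult_lt_compat_r; [apply Rinv_0_lt_compat|]; lra.
Qed.

Lemma rcut_gt m delta0 T : 0 < delta0 -> 2 * m < rcut m delta0 T.
Proof. intros Hd. unfold rcut. pose proof (exp_pos (- T / (4 * m))). nra. Qed.

Lemma is_lim_rcut m delta0 : 0 < m -> is_lim (rcut m delta0) p_infty (2 * m).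
Proof.
  intros Hm.
  assert (Harg : is_lim (fun T => - T / (4 * m)) p_infty m_infty).
  { intros P [M HM]. exists (- M * (4 * m)). intros x Hx. apply HM.
    apply Rmult_lt_reg_r with (4 * m); [lra|].
    replace (- x / (4 * m) * (4 * m)) with (- x) by (field; lra). lra. }
  assert (Hexp : is_lim (fun T => exp (- T / (4 * m))) p_infty 0).
  { apply (is_lim_comp exp _ p_infty 0 m_infty); [apply is_lim_exp_m | exact Harg |].
    exists 0. intros; discriminate. }
  unfold rcut. apply (is_lim_plus _ _ _ (2 * m) (Rbar_mult (2 * delta0) 0)).
  - apply is_lim_const.
  - apply is_lim_scal_l, Hexp.
  - unfold is_Rbar_plus; simpl. do 2 f_equal. ring.
Qed.

(** * The slices *)

Ltac solve_Ck :=
  repeat first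
    [ apply Ck_const | apply Ck_fst | apply Ck_snd | apply Ck_opp
    | apply Ck_plus | apply Ck_mult
    | apply (Ck_comp _ exp); [apply Cn_exp|]
    | apply (Ck_comp _ log_cutoff); [apply Cn_log_cutoff|]
    | apply (Ck_comp _ stretch_inv); [apply Cn_stretch_inv|] ].

Section Slices.

Variable m : R.
Hypothesis m_gt0 : 0 < m.

Definition slice_arg (T r : R) : R := (r - 2 * m) * exp (T / (4 * m)).

Definition slice_v (T r : R) : R :=
  T / 2 + r + 2 * m * (log_cutoff (slice_arg T r) - log_cutoff 2 - ln m).

Definition slice_w (v r : R) : R := (v - r) / (2 * m) + log_cutoff 2 + ln m.

Definition slice_label (v r : R) : R :=
  4 * m * (slice_w v r - log_cutoff (stretch_inv ((r - 2 * m) * exp (slice_w v r)))).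

Lemma Ck_slice_v k : Ck k plane slice_v.
Proof. unfold slice_v, slice_arg. solve_Ck. Qed.

Lemma Ck_slice_label k : Ck k plane slice_label.
Proof. unfold slice_label, slice_w. solve_Ck. Qed.

Lemma slice_w_slice_v T r : slice_w (slice_v T r) r = T / (4 * m) + log_cutoff (slice_arg T r).
Proof. unfold slice_w, slice_v. field. lra. Qed.

Lemma slice_labelK T r : slice_label (slice_v T r) r = T.
Proof.
  unfold slice_label. rewrite slice_w_slice_v, exp_plus.
  replace ((r - 2 * m) * (exp (T / (4 * m)) * exp (log_cutoff (slice_arg T r))))
    with (stretch (slice_arg T r)) by (unfold stretch, slice_arg; ring).
  rewrite stretchK. field. lra.
Qed.

Lemma slice_vK v r : slice_v (slice_label v r) r = v.
Proof.
  set (w := slice_w v r).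
  set (s := stretch_inv ((r - 2 * m) * exp w)).
  assert (Hs : s * exp (log_cutoff s) = (r - 2 * m) * exp w) by apply stretch_invK.
  assert (Harg : slice_arg (slice_label v r) r = s).
  { unfold slice_arg, slice_label. fold w s.
    replace (4 * m * (w - log_cutoff s) / (4 * m)) with (w + - log_cutoff s) by (field; lra).
    rewrite exp_plus, exp_Ropp, <- Rmult_assoc, <- Hs.
    field. apply Rgt_not_eq, exp_pos. }
  unfold slice_v. rewrite Harg. unfold slice_label. fold w s. unfold w, slice_w. field. lra.
Qed.

Lemma d2_slice_v T r :
  d2 slice_v T r = 1 + 2 * m * inv_cutoff (slice_arg T r) * exp (T / (4 * m)).
Proof.
  unfold d2. apply is_derive_unique. unfold slice_v, slice_arg.
  auto_derive; [eexists; apply is_derive_log_cutoff|].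
  rewrite (is_derive_unique (fun x => log_cutoff x) _ _ (is_derive_log_cutoff _)).
  unfold Rminus. ring.
Qed.

Lemma slice_v_outer T r : 2 <= slice_arg T r -> slice_v T r = T + rstar m r.
Proof.
  intros Hs. pose proof (exp_pos (T / (4 * m))) as He.
  assert (Hr : 0 < r - 2 * m).
  { unfold slice_arg in Hs. apply Rmult_lt_reg_r with (exp (T / (4 * m))); lra. }
  unfold slice_v, rstar. rewrite (log_cutoff_ge2 _ Hs).
  unfold slice_arg. rewrite ln_mult, ln_exp by lra.
  replace (r / (2 * m) - 1) with ((r - 2 * m) / (2 * m)) by (field; lra).
  rewrite ln_div, ln_mult by lra. field. lra.
Qed.

Lemma slice_slope_factor T r : 0 < r ->
  (1 - 2 * m / r) * d2 slice_v T r =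
  (r - 2 * m + 2 * m * (slice_arg T r * inv_cutoff (slice_arg T r))) / r.
Proof. intros Hr. rewrite d2_slice_v. unfold slice_arg. field. lra. Qed.

Lemma slice_spacelike T : spacelike_slice m slice_v T.
Proof.
  intros r Hr. unfold radial_tangent.
  pose proof (exp_pos (T / (4 * m))).
  pose proof (inv_cutoff_ge0 (slice_arg T r)).
  pose proof (mul_inv_cutoff_bounds (slice_arg T r)).
  apply radial_spacelike; auto.
  - rewrite d2_slice_v.
    assert (0 <= 2 * m * inv_cutoff (slice_arg T r) * exp (T / (4 * m))).
    { apply Rmult_le_pos; [apply Rmult_le_pos|]; lra. }
    lra.
  - rewrite slice_slope_factor by auto.
    apply Rle_lt_trans with 1; [|lra].
    apply Rmult_le_reg_r with r; auto. unfold Rdiv.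
    rewrite Rmult_assoc, Rinv_l by lra. nra.
Qed.

Lemma slice_slope_outer T r : 2 <= slice_arg T r -> d2 slice_v T r * (1 - 2 * m / r) = 1.
Proof.
  intros Hs.
  assert (Hr : 2 * m < r).
  { unfold slice_arg in Hs. pose proof (exp_pos (T / (4 * m))).
    assert (0 < r - 2 * m) by (apply Rmult_lt_reg_r with (exp (T / (4 * m))); lra). lra. }
  rewrite Rmult_comm, slice_slope_factor, inv_cutoff_ge2 by lra.
  rewrite Rinv_r by lra. field. lra.
Qed.

Lemma slice_arg_ge2 T r : r >= rcut m 1 T -> 2 <= slice_arg T r.
Proof.
  intros Hr. unfold rcut in Hr. unfold slice_arg.
  assert (E : exp (- T / (4 * m)) * exp (T / (4 * m)) = 1).
  { rewrite <- exp_plus, <- exp_0. f_equal. field. lra. }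
  pose proof (exp_pos (T / (4 * m))).
  replace 2 with (2 * exp (- T / (4 * m)) * exp (T / (4 * m))) at 1 by (rewrite Rmult_assoc, E; ring).
  apply Rmult_le_compat_r; lra.
Qed.

End Slices.

Theorem mainTheorem10 (m : R) (hm : 0 < m) :
  exists (F : R -> R -> R) (delta0 : R),
    (* smooth family of spacelike hypersurfaces Sigma_T = {v = F T r} *)
    smooth2 half_plane F /\
    (forall T, spacelike_slice m F T) /\
    (* (i) smooth foliation of {r > 0}: (T, r) -> (F T r, r) is a
       diffeomorphism of R x (0,oo) with smooth inverse (v, r) -> (G v r, r) *)
    (exists G : R -> R -> R,
        smooth2 half_plane G /\
        (forall T r, 0 < r -> G (F T r) r = T) /\
        (forall v r, 0 < r -> F (G v r) r = v)) /\
    (forall v r, 0 < r -> exists! T, Sigma F T v r) /\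
    (* (ii) S_T = Sigma_T /\ H+ is the round sphere {v = F T (2m), r = 2m};
       these foliate H+ and each is a MOTS *)
    (forall v, exists! T, Sigma F T v (2 * m)) /\
    (forall T, round_sphere_is_MOTS m (F T (2 * m)) (2 * m)) /\
    (* (iii) *)
    0 < delta0 /\
    (let rcut := fun T => 2 * m + 2 * delta0 * exp (- T / (4 * m)) in
     (forall T1 T2, T1 < T2 -> rcut T2 < rcut T1) /\
     (forall T, 2 * m < rcut T) /\
     is_lim rcut p_infty (2 * m) /\
     (forall T v r, r >= rcut T ->
        (Sigma F T v r <-> tSch m v r = T)) /\
     (forall T r, r >= rcut T -> tangentially_maximal_at m F T r)).
Proof.
  assert (Hfol : forall v r, 0 < r -> exists! T, Sigma (slice_v m) T v r).
  { intros v r Hr. apply Sigma_unique_of_inverse with (slice_label m); auto.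
    - intros T. apply slice_labelK; auto.
    - apply slice_vK; auto. }
  assert (Houter : forall T r, r >= rcut m 1 T -> 2 <= slice_arg m T r /\ 0 < r).
  { intros T r Hr. pose proof (rcut_gt m 1 T Rlt_0_1).
    split; [apply slice_arg_ge2|]; lra. }
  exists (slice_v m), 1. cbv zeta. fold (rcut m 1).
  split. { exact (smooth2_of_plane _ _ (Ck_slice_v m)). }
  split. { apply slice_spacelike; auto. }
  split.
  { exists (slice_label m). split; [|split].
    - exact (smooth2_of_plane _ _ (Ck_slice_label m)).
    - intros T r _. apply slice_labelK; auto.
    - intros v r _. apply slice_vK; auto. }
  split. { exact Hfol. }
  split. { intros v. apply Hfol. lra. }
  split. { intros T. apply horizon_sphere_MOTS; auto. }
  split. { lra. }
  split. { intros T1 T2. apply rcut_decreasing; lra. }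
  split. { intros T. apply rcut_gt; lra. }
  split. { apply is_lim_rcut; auto. }
  split.
  { intros T v r Hr. destruct (Houter T r Hr).
    apply Sigma_iff_tSch; auto. apply slice_v_outer; auto. }
  { intros T r Hr. apply tangentially_maximal_of_slope, slice_slope_outer; auto.
    apply Houter; auto. }
Qed.
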